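(* Let $(X,\mathcal{B},\mu,T)$ be a rigid measure preserving system (with $\mu$ $\sigma$-finite on a standard space). Then every quasi-factor of $(X,\mathcal{B},\mu,T)$ is rigid.
   Context: A measure preserving system $(X,\mathcal{B},\mu,T)$ is rigid if there is a strictly increasing sequence $(n_k)_{k\ge0}$ of integers such that $T^{n_k}f\to f$ in $L^2(\mu)$ for all $f\in L^2(\mu)$ (equivalently, $\mu(T^{-n_k}A\triangle A)\to0$ for all $A\in\mathcal{B}$ of finite measure). $X^*$ denotes the set of all measures on $(X,\mathcal{B})$, with $\sigma$-algebra $\mathcal{B}^*$ generated by the sets $\{\gamma:\gamma(B)\in[a,b]\}$, $B\in\mathcal{B}$, $0\le a\le b\le\infty$, and $T_*\gamma=\gamma\circ T^{-1}$. A quasi-factor of $(X,\mathcal{B},\mu,T)$ is a probability preserving system $(X^*,\mathcal{B}^*,\xi,T_* )$ where $\xi$ is a $T_*$-invariant probability on $X^*$ with barycenter $\mu$, i.e. $\int f\,d\mu=\int\big(\int f\,d\gamma\big)d\xi(\gamma)$ for all $f\in L^1(\mu)$. *)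

From HB Require Import structures.
From mathcomp Require Import all_boot all_order all_algebra.
From mathcomp Require Import all_classical all_reals all_analysis.
Set Implicit Arguments. Unset Strict Implicit. Unset Printing Implicit Defensive.
Import Order.TTheory GRing.Theory Num.Theory.
Local Open Scope classical_set_scope.
Local Open Scope ring_scope.

Definition standard_borel d (X : measurableType d) (R : realType) : Prop :=
  exists (B : set R) (f : X -> R),
    [/\ measurable B, measurable_fun [set: X] f, injective f,
        f @` [set: X] = B & forall A, measurable A -> measurable (f @` A)].

Definition measure_preserving d (X : measurableType d) (R : realType)
  (mu : {measure set X -> \bar R}) (T : X -> X) : Prop :=
  measurable_fun [set: X] T /\ forall A, measurable A -> mu (T @^-1` A) = mu A.

Definition rigid d (Y : measurableType d) (R : realType)
  (m : set Y -> \bar R) (S : Y -> Y) : Prop :=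
  exists n : nat -> nat, (forall k, (n k < n k.+1)%N) /\
    forall A, measurable A -> (m A < +oo)%E ->
      (fun k => m ((iter (n k) S) @^-1` A `+` A)) @ \oo --> 0%E.

Definition meas_type d (X : measurableType d) (R : realType) :=
  {measure set X -> \bar R}.
HB.instance Definition _ d (X : measurableType d) (R : realType) :=
  gen_eqMixin (meas_type X R).
HB.instance Definition _ d (X : measurableType d) (R : realType) :=
  gen_choiceMixin (meas_type X R).
HB.instance Definition _ d (X : measurableType d) (R : realType) :=
  isPointed.Build (meas_type X R) mzero.

Definition Bstar_gen d (X : measurableType d) (R : realType)
  : set (set (meas_type X R)) :=
  fun S => exists (B : set X) (a b : \bar R),
    [/\ measurable B, (0 <= a)%E, (a <= b)%E &
        S = [set g : meas_type X R | (a <= g B <= b)%E]].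

Definition Xstar d (X : measurableType d) (R : realType)
  : measurableType (@Bstar_gen d X R).-sigma :=
  g_sigma_algebraType (@Bstar_gen d X R).

Definition Tstar d (X : measurableType d) (R : realType) (T : X -> X)
  (mT : measurable_fun [set: X] T) (g : Xstar X R) : Xstar X R :=
  measure_function_pushforward__canonical__measure_function_Measure g mT.

(* xi is a quasi-factor: T_*-invariant probability on X^* with barycenter mu *)
Definition quasi_factor d (X : measurableType d) (R : realType)
  (mu : {measure set X -> \bar R}) (T : X -> X)
  (mT : measurable_fun [set: X] T) (xi : probability (Xstar X R) R) : Prop :=
  (forall E : set (Xstar X R), measurable E ->
      xi (Tstar mT @^-1` E) = xi E) /\
  (forall f : X -> R, mu.-integrable [set: X] (EFin \o f) ->
      (\int[mu]_x (f x)%:E =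
       \int[xi]_(g in [set: Xstar X R]) \int[(g : meas_type X R)]_x (f x)%:E)%E).

From HB Require Import structures.
From mathcomp Require Import all_boot all_order all_algebra.
From mathcomp Require Import all_classical all_reals all_analysis.
From mathcomp Require Import lra measurable_realfun.
Set Implicit Arguments. Unset Strict Implicit. Unset Printing Implicit Defensive.
Import Order.TTheory GRing.Theory Num.Theory.
Local Open Scope classical_set_scope.
Local Open Scope ring_scope.

(** Fix a rigidity sequence (n_k) of T and call a set E of X^* rigid when
    xi (T_*^{-n_k} E `+` E) --> 0. Because xi is T_*-invariant, the rigid sets form a
    sigma-algebra, so it suffices to show that the generating sets
    H = {gamma | c < gamma B} are rigid. For B of finite mu-measure, a measure gamma in
    H \ T_*^{-n_k} H either has gamma B in (c, c + delta], a set of small xi-measure when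
    delta is small, or gives mass at least delta to B \ T^{-n_k} B; by Markov's
    inequality and the barycenter identity the latter set has xi-measure at most
    mu (T^{-n_k} B `+` B) / delta --> 0. Sigma-finiteness of mu reduces arbitrary B to
    sets of finite measure by monotone approximation. *)

Lemma cvge0P (R : realType) (u : (\bar R)^nat) : (forall k, 0 <= u k)%E ->
  u @ \oo --> 0%E <-> forall e : R, 0 < e -> \forall k \near \oo, (u k <= e%:E)%E.
Proof.
move=> u0; split => [/fine_cvgP[fu cu] e e0|h].
  near=> k; have fk : u k \is a fin_num by near: k.
  rewrite -(fineK fk) lee_fin (le_trans (ler_norm _)) // -normrN -sub0r.
  by near: k; exact: cvgr_dist_le.
apply/fine_cvgP; split.
  by apply: filterS (h 1 ltr01) => k uk; rewrite ge0_fin_numE // (le_lt_trans uk) ?ltry.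
apply/cvgrPdist_le => e e0; apply: filterS (h e e0) => k /=.
have := u0 k; case: (u k) => [r| |] //= r0 rk.
by rewrite sub0r normrN ger0_norm // -lee_fin.
Unshelve. all: by end_near.
Qed.

Lemma setY_preimage_setU_subset (Y : Type) (f : Y -> Y) (A B : set Y) :
  f @^-1` (A `|` B) `+` (A `|` B) `<=` (f @^-1` A `+` A) `|` (f @^-1` B `+` B).
Proof.
move=> y; rewrite !setY_def /= => -[[[fA|fB] nAB]|[[yA|yB] nfAB]].
- by left; left; split => // ?; apply: nAB; left.
- by right; left; split => // ?; apply: nAB; right.
- by left; right; split => // ?; apply: nfAB; left.
- by right; right; split => // ?; apply: nfAB; right.
Qed.

Lemma measure_gt_setD d (Y : measurableType d) (R : realType)
    (m : {measure set Y -> \bar R}) (A B : set Y) (c dl : R) :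
  measurable A -> measurable B -> (m B <= c%:E)%E -> ((c + dl)%:E < m A)%E ->
  (dl%:E <= m (A `\` B))%E.
Proof.
move=> mA mB mBc cmA; rewrite leNgt; apply/negP => mAB.
have : (m A <= (dl + c)%:E)%E.
  rewrite (measureDI m mA mB) EFinD; apply: leeD; first exact: ltW.
  apply: le_trans mBc; apply: le_measure; rewrite ?inE //.
  exact: measurableI.
by rewrite addrC leNgt cmA.
Qed.

Lemma measure_setD_sym d (Y : measurableType d) (R : realType)
    (m : {measure set Y -> \bar R}) (A B : set Y) :
  measurable A -> measurable B -> (m A < +oo)%E -> m A = m B ->
  m (A `\` B) = m (B `\` A).
Proof.
move=> mA mB mAoo mAB.
have mBoo : (m B < +oo)%E by rewrite -mAB.
by rewrite measureD // measureD // setIC; congr (_ - _)%E.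
Qed.

Lemma measurable_fun_iter d (Y : measurableType d) (f : Y -> Y) m :
  measurable_fun [set: Y] f -> measurable_fun [set: Y] (iter m f).
Proof.
move=> mf; elim: m => [|m IH] /=; first exact: measurable_id.
exact: measurableT_comp mf IH.
Qed.

Lemma measurable_preimage_iter d (Y : measurableType d) (f : Y -> Y) m E :
  measurable_fun [set: Y] f -> measurable E -> measurable (iter m f @^-1` E).
Proof.
by move=> mf mE; rewrite -[_ @^-1` _]setTI; exact: measurable_fun_iter.
Qed.

Section rigid_set.
Context d (Y : measurableType d) (R : realType) (P : probability Y R).
Variables (S : Y -> Y) (n : nat -> nat).
Hypotheses (mS : measurable_fun [set: Y] S)
  (PS : forall E, measurable E -> P (S @^-1` E) = P E).

Definition rigid_set (E : set Y) := measurable E /\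
  (fun k => P (iter (n k) S @^-1` E `+` E)) @ \oo --> 0%E.

Lemma probability_preimage_iter m E :
  measurable E -> P (iter m S @^-1` E) = P E.
Proof.
elim: m E => [//|m IH] E mE.
have -> : iter m.+1 S @^-1` E = iter m S @^-1` (S @^-1` E) by [].
have mSE : measurable (S @^-1` E) by rewrite -[_ @^-1` _]setTI; exact: mS.
by rewrite IH // PS.
Qed.

Lemma probability_setY_preimage_iter m E : measurable E ->
  P (iter m S @^-1` E `+` E) =
  (P (E `\` iter m S @^-1` E) + P (E `\` iter m S @^-1` E))%E.
Proof.
move=> mE; have mSE := measurable_preimage_iter m mS mE.
rewrite setY_def measureU; first last.
- by apply/seteqP; split => // x [[? ?] []].
- exact: measurableD.
- exact: measurableD.
congr (_ + _)%E; apply: measure_setD_sym => //.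
  by rewrite ltey_eq fin_num_measure.
exact: probability_preimage_iter.
Qed.

Lemma measurable_setY_preimage_iter m E :
  measurable E -> measurable (iter m S @^-1` E `+` E).
Proof.
move=> mE; have mSE := measurable_preimage_iter m mS mE.
by rewrite setY_def; apply: measurableU; exact: measurableD.
Qed.

Lemma rigid_setT : rigid_set [set: Y].
Proof.
split => //; under eq_fun do rewrite preimage_setT setYK measure0.
exact: cvg_cst.
Qed.

Lemma rigid_setC E : rigid_set E -> rigid_set (~` E).
Proof.
move=> [mE cvgE]; split; first exact: measurableC.
suff YC k : iter (n k) S @^-1` (~` E) `+` ~` E = iter (n k) S @^-1` E `+` E.
  by under eq_fun do rewrite YC.
rewrite -preimage_setC /setY; apply/seteqP; split => x /=;
by have [|] := pselect (E x); have [|] := pselect (E (iter (n k) S x)); tauto.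
Qed.

Lemma rigid_set0 : rigid_set set0.
Proof. by rewrite -setCT; exact/rigid_setC/rigid_setT. Qed.

Lemma measure_setY_preimage_iter_setU_le m A B : measurable A -> measurable B ->
  (P (iter m S @^-1` (A `|` B) `+` (A `|` B)) <=
   P (iter m S @^-1` A `+` A) + P (iter m S @^-1` B `+` B))%E.
Proof.
move=> mA mB; apply: le_trans (measureU2 _ _ _); try exact: measurable_setY_preimage_iter.
apply: le_measure; rewrite ?inE.
- by apply: measurable_setY_preimage_iter; exact: measurableU.
- by apply: measurableU; exact: measurable_setY_preimage_iter.
exact: setY_preimage_setU_subset.
Qed.

Lemma rigid_setU A B : rigid_set A -> rigid_set B -> rigid_set (A `|` B).
Proof.
move=> [mA cvgA] [mB cvgB]; split; first exact: measurableU.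
have := cvgeD _ cvgA cvgB; rewrite adde0 => /(_ _ isT) cvgAB.
apply: (squeeze_cvge _ (cvg_cst 0%E) cvgAB); apply: nearW => k.
by rewrite measure_ge0 /=; exact: measure_setY_preimage_iter_setU_le.
Qed.

Lemma rigid_set_bigcup (F : (set Y)^nat) :
  (forall i, rigid_set (F i)) -> rigid_set (\bigcup_i F i).
Proof.
move=> rF; have mF i : measurable (F i) by case: (rF i).
set U := \bigcup_i F i; have mU : measurable U by exact: bigcupT_measurable.
pose V N := \big[setU/set0]_(i < N) F i.
have rV N : rigid_set (V N).
  elim: N => [|N IH]; last by rewrite /V big_ord_recr /=; exact: rigid_setU.
  by rewrite /V big_ord0; exact: rigid_set0.
have mV N : measurable (V N) by case: (rV N).
pose W N := U `\` V N; have mW N : measurable (W N) by exact: measurableD.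
(* U = V N `|` W N with V N rigid, W N decreasing to the empty set, and by
   invariance P (S^{-n} W `+` W) <= 2 P W. *)
have cvgW : P \o W @ \oo --> 0%E.
  rewrite [0%E](_ : _ = P (\bigcap_N W N)).
    apply: nonincreasing_cvg_mu => //.
    - by rewrite ltey_eq fin_num_measure.
    - exact: bigcapT_measurable.
    - by move=> N M NM; apply/subsetPset; apply: setDS; exact: subset_bigsetU.
  rewrite [\bigcap_N W N](_ : _ = set0) ?measure0 //.
  apply/seteqP; split => // x WNx.
  have [[i _ Fix] _] := WNx 0%N I.
  by have [_] := WNx i.+1 I; apply; exact: (bigsetU_sup (ltnSn i) Fix).
split => //; apply/cvge0P => [k|e e0]; first exact: measure_ge0.
have e3 : 0 < e / 3 by rewrite divr_gt0.
have /(cvge0P (fun _ => measure_ge0 _ _))/(_ _ e3)[N _ /(_ N (leqnn N)) PWN] := cvgW.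
have /(cvge0P (fun _ => measure_ge0 _ _))/(_ _ e3) := (rV N).2.
apply: filterS => k PVN.
have -> : U = V N `|` W N by rewrite setDUK //; exact: bigsetU_bigcup.
apply: (le_trans (measure_setY_preimage_iter_setU_le (n k) (mV N) (mW N))).
rewrite (probability_setY_preimage_iter _ (mW N)).
have PWN' : (P (W N `\` iter (n k) S @^-1` W N) <= (e / 3)%:E)%E.
  apply: le_trans PWN; apply: le_measure; rewrite ?inE //.
  by apply: measurableD => //; exact: measurable_preimage_iter.
apply: le_trans (leeD PVN (leeD PWN' PWN')) _.
by rewrite -!EFinD lee_fin; lra.
Qed.

Lemma rigid_set_sigma_algebra : sigma_algebra [set: Y] rigid_set.
Proof.
split; [exact: rigid_set0 | | exact: rigid_set_bigcup].
by move=> A rA; rewrite setTD; exact: rigid_setC.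
Qed.

End rigid_set.

Lemma emeasurable_fun_oc d (Y : measurableType d) (R : realType) (f : Y -> \bar R)
    (a b : \bar R) :
  measurable_fun [set: Y] f -> measurable [set y | a < f y <= b]%E.
Proof.
move=> mf; have := mf measurableT _ (emeasurable_itv `]a, b]); rewrite setTI.
by congr measurable; apply/seteqP; split => y; rewrite /= in_itv.
Qed.

Lemma measure_band_cvg0 d (Y : measurableType d) (R : realType)
    (m : {finite_measure set Y -> \bar R}) (f : Y -> \bar R) (c : R) :
  measurable_fun [set: Y] f ->
  (fun N => m [set y | c%:E < f y <= (c + N.+1%:R^-1)%:E]%E) @ \oo --> 0%E.
Proof.
move=> mf; pose band N := [set y | c%:E < f y <= (c + N.+1%:R^-1)%:E]%E.
have mband N : measurable (band N) by exact: emeasurable_fun_oc.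
rewrite [0%E](_ : _ = m (\bigcap_N band N)).
  apply: (@nonincreasing_cvg_mu _ _ _ m band) => //.
  - by rewrite ltey_eq fin_num_measure.
  - exact: bigcapT_measurable.
  move=> N M NM; apply/subsetPset => y /andP[cf fN]; apply/andP; split => //.
  by apply: le_trans fN _; rewrite lee_fin lerD2l lef_pV2 ?posrE // ler_nat ltnS.
rewrite -(measure0 m); congr (m _).
apply/esym/seteqP; split => // y bandy; have /andP[cf fc1] := bandy 0%N I.
have [r fyr] : exists r, f y = r%:E.
  by move: cf fc1; case: (f y) => [r| |] // _ _; exists r.
move: cf; rewrite fyr lte_fin => cr; have [N cNr] := ltr_add_invr cr.
have /andP[_] := bandy N I; rewrite fyr lee_fin => rcN.
by have := lt_le_trans cNr rcN; rewrite ltxx.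
Qed.

Section quasi_factor.
Context (R : realType) d (X : measurableType d) (mu : {measure set X -> \bar R}).
Variables (T : X -> X) (mT : measurable_fun [set: X] T).
Local Notation XS := (Xstar X R).
Local Notation S := (Tstar mT).

Definition meas_eval (B : set X) (g : XS) : \bar R := (g : meas_type X R) B.

Lemma meas_eval_ge0 B g : (0 <= meas_eval B g)%E.
Proof. exact: measure_ge0. Qed.

Lemma measurable_meas_eval B : measurable B -> measurable_fun [set: XS] (meas_eval B).
Proof.
move=> mB; apply: (measurability (ErealGenCInfty.G (R:=R))).
  exact: ErealGenCInfty.measurableE.
move=> _ [_ [r ->] <-]; rewrite setTI.
have [r0|r0] := leP r 0.
  rewrite [X in measurable X](_ : _ = [set: XS]) //.
  apply/seteqP; split => g // _ /=; rewrite in_itv /= andbT.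
  by apply: le_trans (meas_eval_ge0 B g); rewrite lee_fin.
apply: sub_sigma_algebra; exists B, r%:E, +oo%E; split => //.
- by rewrite lee_fin ltW.
- exact: leey.
apply/seteqP; split => g /=; rewrite in_itv /= andbT.
  by move=> ->; rewrite leey.
by case/andP.
Qed.

Lemma measurable_Tstar : measurable_fun [set: XS] S.
Proof.
have gen : @measurable _ XS = <<s @Bstar_gen d X R >> by [].
apply: (measurability _ gen).
move=> _ [_ [B [a [b [mB a0 ab ->]]]] <-]; rewrite setTI.
apply: sub_sigma_algebra; exists (T @^-1` B), a, b; split => //.
by rewrite -[_ @^-1` _]setTI; exact: mT.
Qed.

Lemma meas_eval_iter_Tstar m B g :
  meas_eval B (iter m S g) = meas_eval (iter m T @^-1` B) g.
Proof. by elim: m g B => [//|m IH] g B; exact: (IH g (T @^-1` B)). Qed.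

Lemma setD_preimage_Tstar_meas_eval_gt m B (c dl : R) : measurable B ->
  [set g | c%:E < meas_eval B g]%E `\` iter m S @^-1` [set g | c%:E < meas_eval B g]%E
  `<=` [set g | c%:E < meas_eval B g <= (c + dl)%:E]%E
       `|` [set g | dl%:E <= meas_eval (B `\` iter m T @^-1` B) g]%E.
Proof.
move=> mB g [/= cgB cgSB]; have [gBle|gBgt] := leP (meas_eval B g) (c + dl)%:E.
  by left; apply/andP.
right; apply: measure_gt_setD gBgt => //; first exact: measurable_preimage_iter.
by rewrite leNgt; apply/negP; move: cgSB; rewrite meas_eval_iter_Tstar.
Qed.

Lemma meas_eval_gt_bigcup (F : (set X)^nat) B c :
  [set: X] = \bigcup_i F i -> nondecreasing_seq F -> (forall i, measurable (F i)) ->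
  measurable B ->
  [set g | c%:E < meas_eval B g]%E = \bigcup_j [set g | c%:E < meas_eval (B `&` F j) g]%E.
Proof.
move=> FT ndF mF mB; have mBF j : measurable (B `&` F j) by exact: measurableI.
apply/seteqP; split => g /= cgB; last first.
  case: cgB => j _ /= cgBF; apply: lt_le_trans cgBF _.
  by apply: le_measure; rewrite ?inE.
have ndBF : nondecreasing_seq (fun j => B `&` F j).
  move=> i j ij; apply/subsetPset; apply: setIS.
  by apply/subsetPset; exact: ndF.
have := nondecreasing_cvg_mu (mu := g : meas_type X R) mBF
  (bigcupT_measurable _ mBF) ndBF.
rewrite -setI_bigcupr -FT setIT => cvgBF.
by have [j _ /(_ j (leqnn j))] := cvgBF _ (open_ereal_gt' cgB); exists j.
Qed.

Variable xi : probability XS R.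
Hypothesis xi_qf : quasi_factor mu mT xi.

Lemma integral_meas_eval C : measurable C -> (mu C < +oo)%E ->
  (\int[xi]_(g in [set: XS]) meas_eval C g = mu C)%E.
Proof.
move=> mC muC.
have intC : mu.-integrable [set: X] (EFin \o (\1_C : X -> R)).
  apply/integrableP; split; first by apply/measurable_EFinP; exact: measurable_indic.
  under eq_integral do rewrite /= ger0_norm //.
  by rewrite integral_indic // setIT.
have := proj2 xi_qf _ intC; rewrite integral_indic // setIT => ->.
apply: eq_integral => g _.
by rewrite integral_indic // setIT.
Qed.

Lemma markov_meas_eval C (a b : R) : measurable C -> 0 < a ->
  (mu C <= (a * b)%:E)%E -> (xi [set g | a%:E <= meas_eval C g] <= b%:E)%E.
Proof.
move=> mC a0 muC; have muCoo : (mu C < +oo)%E by rewrite (le_lt_trans muC) ?ltry.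
rewrite -(@lee_pmul2l _ a%:E) // -EFinM; apply: le_trans muC.
rewrite -integral_meas_eval //.
have := le_integral_abse xi measurableT (measurable_meas_eval mC) a0.
rewrite setTI; under eq_integral do rewrite gee0_abs ?meas_eval_ge0 //.
congr (_ * xi _ <= _)%E; apply/seteqP; split => g /=; by rewrite gee0_abs ?meas_eval_ge0.
Qed.

Lemma rigid_set_meas_eval_gt_of_mu_rigid n B c : measurable B ->
  (fun k => mu (iter (n k) T @^-1` B `+` B)) @ \oo --> 0%E ->
  rigid_set xi S n [set g | c%:E < meas_eval B g]%E.
Proof.
move=> mB cvgB; set H := [set g | _].
have mH : measurable H.
  have := emeasurable_fun_o_infty measurableT (measurable_meas_eval mB) c%:E.
  by rewrite setTI.
split => //; apply/cvge0P => [k|e e0]; first exact: measure_ge0.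
have e4 : 0 < e / 4 by rewrite divr_gt0.
have /(cvge0P (fun _ => measure_ge0 _ _))/(_ _ e4)[N _ /(_ N (leqnn N)) xi_band] :=
  measure_band_cvg0 xi c (measurable_meas_eval mB).
pose dl : R := N.+1%:R^-1; have dl0 : 0 < dl by rewrite invr_gt0.
have /(cvge0P (fun _ => measure_ge0 _ _))/(_ _ (mulr_gt0 dl0 e4)) := cvgB.
apply: filterS => k muBk.
have mBk : measurable (iter (n k) T @^-1` B) by exact: measurable_preimage_iter.
have mBBk := measurableD mB mBk.
have xi_markov :
    (xi [set g | dl%:E <= meas_eval (B `\` iter (n k) T @^-1` B) g] <= (e / 4)%:E)%E.
  apply: (markov_meas_eval mBBk dl0); apply: le_trans muBk.
  apply: le_measure; rewrite ?inE //; first exact: measurable_setY_preimage_iter.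
  by rewrite setY_def => g; right.
have xi_setD : (xi (H `\` iter (n k) S @^-1` H) <= (e / 2)%:E)%E.
  have mband := emeasurable_fun_oc c%:E (c + dl)%:E (measurable_meas_eval mB).
  have mmarkov : measurable [set g | dl%:E <= meas_eval (B `\` iter (n k) T @^-1` B) g]%E.
    have := emeasurable_fun_c_infty measurableT (measurable_meas_eval mBBk) dl%:E.
    by rewrite setTI.
  apply: le_trans (le_measure xi _ _
    (setD_preimage_Tstar_meas_eval_gt (m := n k) (c := c) dl mB)) _.
  - rewrite inE; apply: measurableD => //.
    exact: measurable_preimage_iter measurable_Tstar _.
  - by rewrite inE; exact: measurableU.
  apply: le_trans (measureU2 _ mband mmarkov) _.
  by apply: le_trans (leeD xi_band xi_markov) _; rewrite -EFinD lee_fin; lra.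
rewrite (probability_setY_preimage_iter measurable_Tstar (proj1 xi_qf) _ mH).
by apply: le_trans (leeD xi_setD xi_setD) _; rewrite -EFinD lee_fin; lra.
Qed.

Variable n : nat -> nat.
Hypothesis mu_rigid : forall A, measurable A -> (mu A < +oo)%E ->
  (fun k => mu (iter (n k) T @^-1` A `+` A)) @ \oo --> 0%E.
Hypothesis mu_sigma_finite : sigma_finite [set: X] mu.

Lemma rigid_set_meas_eval_gt B c :
  measurable B -> rigid_set xi S n [set g | c%:E < meas_eval B g]%E.
Proof.
move=> mB; have /sigma_finiteP[F [FT ndF Ffin]] := mu_sigma_finite.
have mF i : measurable (F i) by case: (Ffin i).
rewrite (meas_eval_gt_bigcup c FT ndF mF mB).
apply: (rigid_set_bigcup measurable_Tstar (proj1 xi_qf)) => j.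
have mBF : measurable (B `&` F j) by exact: measurableI.
have muBF : (mu (B `&` F j) < +oo)%E.
  by apply: le_lt_trans (proj2 (Ffin j)); apply: le_measure; rewrite ?inE.
exact: rigid_set_meas_eval_gt_of_mu_rigid mBF (mu_rigid mBF muBF).
Qed.

Lemma rigid_set_meas_eval_preimage B (A : set \bar R) :
  measurable B -> measurable A -> rigid_set xi S n (meas_eval B @^-1` A).
Proof.
move=> mB mA.
have sigma : sigma_algebra [set: \bar R] [set A | rigid_set xi S n (meas_eval B @^-1` A)].
  split => [|A' rA'|F rF] /=.
  - by rewrite preimage_set0; exact: rigid_set0.
  - by rewrite setTD -preimage_setC; exact: rigid_setC.
  - by rewrite preimage_bigcup; exact: (rigid_set_bigcup measurable_Tstar (proj1 xi_qf)).
have gen :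
    ErealGenOInfty.G (R := R) `<=` [set A | rigid_set xi S n (meas_eval B @^-1` A)].
  move=> _ [r ->] /=.
  rewrite [X in rigid_set _ _ _ X](_ : _ = [set g | r%:E < meas_eval B g]%E).
    exact: rigid_set_meas_eval_gt.
  by apply/seteqP; split => g; rewrite /= in_itv /= andbT.
change (emeasurable (@ocitv R) A) in mA; rewrite ErealGenOInfty.measurableE in mA.
exact: smallest_sub sigma gen _ mA.
Qed.

Lemma rigid_set_Bstar_gen : @Bstar_gen d X R `<=` rigid_set xi S n.
Proof.
move=> _ [B [a [b [mB _ _ ->]]]].
rewrite [X in rigid_set _ _ _ X](_ : _ = meas_eval B @^-1` `[a, b]%classic).
  exact/rigid_set_meas_eval_preimage/emeasurable_itv.
by apply/seteqP; split => g; rewrite /= in_itv.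
Qed.

End quasi_factor.

Theorem proposition3p1 (R : realType) (d : measure_display)
  (X : measurableType d) (mu : {measure set X -> \bar R}) (T : X -> X)
  (hstd : standard_borel X R)
  (hsf : sigma_finite [set: X] mu)
  (mT : measurable_fun [set: X] T)
  (hmp : measure_preserving mu T)
  (hrig : rigid mu T)
  (xi : probability (Xstar X R) R)
  (hqf : quasi_factor mu mT xi) :
  rigid xi (Tstar mT).
Proof.
have [n [n_incr mu_rigid]] := hrig; exists n; split => // E mE _.
have rigid_sigma := rigid_set_sigma_algebra n (measurable_Tstar mT) (proj1 hqf).
have := smallest_sub rigid_sigma (rigid_set_Bstar_gen hqf mu_rigid hsf) mE.
by case.
Qed.
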